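(* Let $f:\mathbb{R}^n\times D\to\mathbb{R}^n$ and a forcing function $d:[0,\infty)\to D$ be given, and consider the Cauchy problem $\dot y(t)=f(y(t),d(t))$, $y(t_0)=y_0$. Denote its exact solution by $\tilde y(t,y_0,t_0)$ (so $\tilde y(t_0,y_0,t_0)=y_0$). Let $M\subset\mathbb{R}^n$ be a manifold such that $\tilde y(t,y_0,t_0)\in M$ for all $t\ge t_0$ and all $y_0\in M$. Let $y_0\in M$ and let $y(t)=\tilde y(t,y_0,0)$ be the exact solution with initial time $0$. Assume $y$ is locally exponentially stable on $M$, i.e. there exist $\delta>0$, $\gamma>0$, $C_1<\infty$ such that $$\|\tilde y(t,y^{(1)}_0,t_0)-\tilde y(t,y^{(2)}_0,t_0)\|\le C_1 e^{-\gamma(t-t_0)}\|y^{(1)}_0-y^{(2)}_0\|$$ for all $t\ge t_0\ge 0$ and all $y^{(1)}_0,y^{(2)}_0\in M$ with $\|y^{(1)}_0-y(t_0)\|\le\delta$, $\|y^{(2)}_0-y(t_0)\|\le\delta$. Consider a numerical algorithm on $[0,T]$ with constant time step $\Delta t>0$, time instances ${}^n t=n\Delta t$, $n=0,1,\dots,N$, ${}^N t=T$, producing approximations ${}^n y$ with ${}^0 y=y_0$, such that for some constant $C_2<\infty$ the one-step error satisfies $$\|\tilde y({}^{n+1}t,{}^n y,{}^n t)-{}^{n+1}y\|\le C_2(\Delta t)^2\quad\text{for all } n,$$ and such that every numerical approximation lies exactly on the manifold, ${}^n y\in M$ for all $n$. Then there exists a constant $C<\infty$, not depending on the length $T$ of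 the time interval, such that $\|{}^n y-y({}^n t)\|\le C\,\Delta t$ for all $n$, as $\Delta t\to 0$.
   Context: $\|\cdot\|$ denotes a norm on $\mathbb{R}^n$. The system is a system with input: $d(t)$ is a given forcing function, and the initial value is given. ''As $\Delta t\to0$'' means the estimate holds for all sufficiently small $\Delta t$. *)

From HB Require Import structures.
From mathcomp Require Import all_boot all_order all_algebra.
From mathcomp Require Import all_classical all_reals all_analysis.
Set Implicit Arguments. Unset Strict Implicit. Unset Printing Implicit Defensive.
Import Order.TTheory GRing.Theory Num.Theory.
Import numFieldNormedType.Exports.
Local Open Scope classical_set_scope.
Local Open Scope ring_scope.

Definition is_norm (R : realType) (n : nat) (nrm : 'rV[R]_n -> R) : Prop :=
  [/\ forall x y, nrm (x + y) <= nrm x + nrm y,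
      forall (a : R) x, nrm (a *: x) = `|a| * nrm x
    & forall x, nrm x = 0 -> x = 0].

Definition exact_solution (R : realType) (n : nat) (D : Type)
  (f : 'rV[R]_n -> D -> 'rV[R]_n) (d : R -> D) (M : set 'rV[R]_n)
  (ytil : R -> 'rV[R]_n -> R -> 'rV[R]_n) : Prop :=
  forall (t0 : R) (y0 : 'rV[R]_n), 0 <= t0 -> M y0 ->
    [/\ ytil t0 y0 t0 = y0,
        (fun s => ytil s y0 t0) @ t0^'+ --> y0,
        (forall t, t0 < t ->
           is_derive t (1 : R) (fun s => ytil s y0 t0) (f (ytil t y0 t0) (d t)))
      & (forall z : R -> 'rV[R]_n, z t0 = y0 -> z @ t0^'+ --> y0 ->
           (forall t, t0 < t -> is_derive t (1 : R) z (f (z t) (d t))) ->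
           forall t, t0 <= t -> z t = ytil t y0 t0)].

From HB Require Import structures.
From mathcomp Require Import all_boot all_order all_algebra.
From mathcomp Require Import all_classical all_reals all_analysis.
From mathcomp Require Import ring lra.
Set Implicit Arguments. Unset Strict Implicit. Unset Printing Implicit Defensive.
Import Order.TTheory GRing.Theory Num.Theory.
Import numFieldNormedType.Exports.
Local Open Scope classical_set_scope.
Local Open Scope ring_scope.

(* Lady Windermere's fan.  Write [t_k = k h] and [W_j] for the exact flow of
   the numerical value [Y_j] from [t_j] to [t_(j+1)], so that [Y_(j+1) - W_j]
   is the local error.  The global error at [t_k] telescopes into the local
   errors transported by the exact flow from [t_(j+1)] to [t_k]; by exponential
   stability each contributes [C1 C2 h^2 exp(-gamma (t_k - t_(j+1)))], and the
   geometric series of these is [O(h)] uniformly in [k].  Stability may only be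
   used within distance [delta] of the reference solution, which is guaranteed
   by a strong induction on [k]: the errors at earlier steps are already
   [O(h)], hence below [delta] once [h] is small. *)

Section NormFacts.
Variables (R : realType) (n : nat) (nrm : 'rV[R]_n -> R).
Hypothesis hn : is_norm nrm.

Lemma nrm0 : nrm 0 = 0.
Proof. by case: hn => _ hZ _; rewrite -(scale0r (0 : 'rV[R]_n)) hZ normr0 mul0r. Qed.

Lemma nrmN x : nrm (- x) = nrm x.
Proof. by case: hn => _ hZ _; rewrite -scaleN1r hZ normrN normr1 mul1r. Qed.

Lemma nrm_ge0 x : 0 <= nrm x.
Proof.
case: hn => hD _ _; have := hD x (- x).
by rewrite subrr nrm0 nrmN; lra.
Qed.

Lemma nrm_distC x y : nrm (x - y) = nrm (y - x).
Proof. by rewrite -nrmN opprB. Qed.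

Lemma nrm_distD x y z : nrm (x - z) <= nrm (x - y) + nrm (y - z).
Proof. by case: hn => hD _ _; have := hD (x - y) (y - z); rewrite addrA subrK. Qed.

End NormFacts.

Lemma exact_solution_flow (R : realType) (n : nat) (D : Type)
  (f : 'rV[R]_n -> D -> 'rV[R]_n) (d : R -> D) (M : set 'rV[R]_n)
  (ytil : R -> 'rV[R]_n -> R -> 'rV[R]_n) :
  exact_solution f d M ytil ->
  (forall t0 t z, 0 <= t0 -> t0 <= t -> M z -> M (ytil t z t0)) ->
  forall s0 s1 t z, 0 <= s0 -> s0 <= s1 -> s1 <= t -> M z ->
    ytil t z s0 = ytil t (ytil s1 z s0) s1.
Proof.
move=> ex inv s0 s1 t z s0_ge0 s01 s1t Mz.
have [<-|s01_neq] := eqVneq s0 s1; first by have [-> _ _ _] := ex s0 z s0_ge0 Mz.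
have s01_lt : s0 < s1 by rewrite lt_neqAle s01_neq.
have [_ _ solves _] := ex s0 z s0_ge0 Mz.
have [_ _ _ unique] :=
  ex s1 (ytil s1 z s0) (le_trans s0_ge0 s01) (inv _ _ _ s0_ge0 s01 Mz).
apply: (unique (fun s => ytil s z s0)) => //.
- apply: cvg_at_right_filter.
  have := @ex_derive _ _ _ _ _ _ _ (solves s1 s01_lt).
  by move/derivable1_diffP/differentiable_continuous.
- by move=> s s1s; apply: solves; apply: lt_trans s1s.
Qed.

(* [(1 + u) / u] is a supersolution of [L = 1 + exp(-u) L], hence bounds the
   geometric series [sum_i exp(-i u)]. *)
Lemma expR_geometric_bound (R : realType) (u : R) :
  0 < u -> 1 + expR (- u) * ((1 + u) / u) <= (1 + u) / u.
Proof.
move=> u_gt0.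
have q_le : expR (- u) * (1 + u) <= 1.
  rewrite -[leRHS](expRxMexpNx_1 u) [leLHS]mulrC.
  by apply: ler_wpM2r; [exact: ltW (expR_gt0 _) | exact: expR_ge1Dx].
rewrite -subr_ge0.
have -> : (1 + u) / u - (1 + expR (- u) * ((1 + u) / u))
          = (1 - expR (- u) * (1 + u)) / u by field; exact: lt0r_neq0.
by apply: divr_ge0; lra.
Qed.

Section GlobalError.
Variables (R : realType) (n : nat) (nrm : 'rV[R]_n -> R) (D : Type)
  (f : 'rV[R]_n -> D -> 'rV[R]_n) (d : R -> D) (M : set 'rV[R]_n)
  (ytil : R -> 'rV[R]_n -> R -> 'rV[R]_n) (y0 : 'rV[R]_n).
Hypotheses (hn : is_norm nrm) (ex : exact_solution f d M ytil)
  (invariant : forall t0 t z, 0 <= t0 -> t0 <= t -> M z -> M (ytil t z t0))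
  (My0 : M y0).

Let y t := ytil t y0 0.

Variables (delta gamma C1 : R).
Hypotheses (gamma_gt0 : 0 < gamma) (C1_ge0 : 0 <= C1).
Hypothesis stable : forall t0 t y1 y2, 0 <= t0 -> t0 <= t -> M y1 -> M y2 ->
  nrm (y1 - y t0) <= delta -> nrm (y2 - y t0) <= delta ->
  nrm (ytil t y1 t0 - ytil t y2 t0)
    <= C1 * expR (- gamma * (t - t0)) * nrm (y1 - y2).

Lemma stable_le t0 t y1 y2 : 0 <= t0 -> t0 <= t -> M y1 -> M y2 ->
  nrm (y1 - y t0) <= delta -> nrm (y2 - y t0) <= delta ->
  nrm (ytil t y1 t0 - ytil t y2 t0) <= C1 * nrm (y1 - y2).
Proof.
move=> t0_ge0 t0t M1 M2 near1 near2.
apply: le_trans (@stable t0 t y1 y2 t0_ge0 t0t M1 M2 near1 near2) _.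
rewrite -mulrA ler_wpM2l // ler_piMl ?nrm_ge0 // expR_le1 mulNr oppr_le0.
by apply: mulr_ge0; [exact: ltW | rewrite subr_ge0].
Qed.

Variables (h C2 : R) (N : nat) (Y : nat -> 'rV[R]_n).
Hypotheses (h_gt0 : 0 < h) (h_le1 : h <= 1) (C2_ge0 : 0 <= C2).

Let t (k : nat) := k%:R * h.

Hypotheses (Y0 : Y 0 = y0) (MY : forall k, (k <= N)%N -> M (Y k)).
Hypothesis local_error : forall k, (k < N)%N ->
  nrm (ytil (t k.+1) (Y k) (t k) - Y k.+1) <= C2 * h ^+ 2.

Variable K : R.
Hypotheses (K_ge : C1 * C2 * (1 + gamma) / gamma <= K)
  (h_small : (K + C1 * K + C2) * h <= delta).

Let K_ge0 : 0 <= K.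
Proof.
apply: le_trans K_ge; apply: divr_ge0; last exact: ltW.
by apply: mulr_ge0; [exact: mulr_ge0 | rewrite addr_ge0 // ltW].
Qed.

Let t_ge0 k : 0 <= t k.
Proof. by apply: mulr_ge0 => //; exact: ltW. Qed.

Let t_le i j : (i <= j)%N -> t i <= t j.
Proof. by move=> ij; apply: ler_wpM2r; [exact: ltW | rewrite ler_nat]. Qed.

Let tS k : t k.+1 = t k + h.
Proof. by rewrite /t -addn1 natrD mulrDl mul1r. Qed.

Let W j := ytil (t j.+1) (Y j) (t j).

Lemma numerical_steps_near j : (j < N)%N -> nrm (Y j - y (t j)) <= K * h ->
  nrm (W j - y (t j.+1)) <= delta /\ nrm (Y j.+1 - y (t j.+1)) <= delta.
Proof.
move=> jN err_j.
have Kh_ge0 := mulr_ge0 K_ge0 (ltW h_gt0).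
have C1Kh_ge0 := mulr_ge0 C1_ge0 Kh_ge0.
have C2h_ge0 := mulr_ge0 C2_ge0 (ltW h_gt0).
have budget : K * h + C1 * (K * h) + C2 * h <= delta.
  by move: h_small; rewrite !mulrDl -mulrA.
have near_j : nrm (Y j - y (t j)) <= delta by apply: le_trans err_j _; lra.
have reference_flow : y (t j.+1) = ytil (t j.+1) (y (t j)) (t j).
  exact: (exact_solution_flow ex invariant (lexx (0 : R)) (t_ge0 j)
    (t_le (leqnSn j)) My0).
have flow_err : nrm (W j - y (t j.+1)) <= C1 * (K * h).
  rewrite reference_flow; apply: le_trans (ler_wpM2l C1_ge0 err_j).
  apply: stable_le => //; first exact: t_le.
  - exact: MY (ltnW jN).
  - exact: invariant (lexx (0 : R)) (t_ge0 j) My0.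
  - by rewrite subrr nrm0 //; lra.
have local_j : nrm (W j - Y j.+1) <= C2 * h.
  apply: le_trans (local_error jN) _.
  by rewrite ler_wpM2l // expr2 ler_piMr //; exact: ltW.
split; first lra.
by apply: le_trans (nrm_distD hn _ (W j) _) _; rewrite nrm_distC //; lra.
Qed.

Lemma propagated_local_error j k : (j < k)%N -> (k <= N)%N ->
  nrm (Y j - y (t j)) <= K * h ->
  nrm (ytil (t k) (Y j.+1) (t j.+1) - ytil (t k) (W j) (t j.+1))
    <= C1 * C2 * h ^+ 2 * expR (- gamma * (t k - t j.+1)).
Proof.
move=> jk kN err_j.
have jN : (j < N)%N := leq_trans jk kN.
have [near_W near_Y] := numerical_steps_near jN err_j.
have MW : M (W j) by apply: invariant (t_ge0 j) (t_le (leqnSn j)) (MY (ltnW jN)).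
apply: le_trans (@stable (t j.+1) (t k) (Y j.+1) (W j)
  (t_ge0 j.+1) (t_le jk) (MY jN) MW near_Y near_W) _.
set E := expR _.
have -> : C1 * C2 * h ^+ 2 * E = C1 * E * (C2 * h ^+ 2) by ring.
apply: ler_wpM2l; first by rewrite mulr_ge0 // ltW // expR_gt0.
by rewrite nrm_distC //; exact: local_error.
Qed.

Lemma fan_bound k : (k <= N)%N ->
  (forall j, (j < k)%N -> nrm (Y j - y (t j)) <= K * h) ->
  forall j, (j <= k)%N ->
  nrm (ytil (t k) (Y j) (t j) - y (t k))
    <= C1 * C2 * h ^+ 2 * expR (- gamma * (t k - t j))
       * ((1 + gamma * h) / (gamma * h)).
Proof.
move=> kN errs.
have u_gt0 : 0 < gamma * h by exact: mulr_gt0.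
set L := (1 + gamma * h) / (gamma * h).
have L_ge0 : 0 <= L by apply: divr_ge0; [rewrite addr_ge0 // ltW | exact: ltW].
have B_ge0 : 0 <= C1 * C2 * h ^+ 2.
  by apply: mulr_ge0; [exact: mulr_ge0 | rewrite exprn_ge0 // ltW].
elim=> [_ | j IHj jk].
  have -> : ytil (t k) (Y 0) (t 0) = y (t k) by rewrite Y0 /t mul0r.
  rewrite subrr nrm0 //; apply: mulr_ge0 L_ge0.
  by apply: mulr_ge0 B_ge0 _; exact: ltW (expR_gt0 _).
have flow_split : ytil (t k) (Y j) (t j) = ytil (t k) (W j) (t j.+1).
  exact: (exact_solution_flow ex invariant (t_ge0 j) (t_le (leqnSn j))
    (t_le jk) (MY (leq_trans (ltnW jk) kN))).
apply: le_trans (nrm_distD hn _ (ytil (t k) (W j) (t j.+1)) _) _.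
have := propagated_local_error jk kN (errs j jk).
have := IHj (ltnW jk); rewrite flow_split.
set B := C1 * C2 * h ^+ 2; set E := expR (- gamma * (t k - t j.+1)).
have -> : expR (- gamma * (t k - t j)) = E * expR (- (gamma * h)).
  by rewrite -expRD tS; congr expR; ring.
have E_ge0 : 0 <= E by exact: ltW (expR_gt0 _).
have := ler_wpM2l (mulr_ge0 B_ge0 E_ge0) (expR_geometric_bound u_gt0).
rewrite -/B -/L mulrDr mulr1.
have -> : B * (E * expR (- (gamma * h))) * L = B * E * (expR (- (gamma * h)) * L) by ring.
move: (B * E) (expR (- (gamma * h)) * L) => BE qL; lra.
Qed.

Lemma global_error_bound k : (k <= N)%N -> nrm (Y k - y (t k)) <= K * h.
Proof.
elim/ltn_ind: k => k IH kN.
have := fan_bound kN (fun j jk => IH j jk (leq_trans (ltnW jk) kN)) (leqnn k).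
have [-> _ _ _] := ex (t_ge0 k) (MY kN).
rewrite subrr mulr0 expR0 mulr1 => /le_trans; apply.
have -> : C1 * C2 * h ^+ 2 * ((1 + gamma * h) / (gamma * h))
          = C1 * C2 * (1 + gamma * h) / gamma * h.
  by field; apply/andP; split; exact: lt0r_neq0.
apply: ler_wpM2r; first exact: ltW.
apply: le_trans K_ge; apply: ler_wpM2r; first by rewrite invr_ge0 ltW.
apply: ler_wpM2l; first exact: mulr_ge0.
by rewrite lerD2l ler_piMr // ltW.
Qed.

End GlobalError.

Theorem theorem1 (R : realType) (n : nat) (nrm : 'rV[R]_n -> R) (D : Type)
  (f : 'rV[R]_n -> D -> 'rV[R]_n) (d : R -> D) (M : set 'rV[R]_n)
  (ytil : R -> 'rV[R]_n -> R -> 'rV[R]_n) (y0 : 'rV[R]_n)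
  (Y : R -> nat -> nat -> 'rV[R]_n) (C2 : R) :
  is_norm nrm ->
  exact_solution f d M ytil ->
  (forall t0 t z, 0 <= t0 -> t0 <= t -> M z -> M (ytil t z t0)) ->
  M y0 ->
  (exists (delta gamma C1 : R), 0 < delta /\ 0 < gamma /\
     forall t0 t y1 y2, 0 <= t0 -> t0 <= t -> M y1 -> M y2 ->
       nrm (y1 - ytil t0 y0 0) <= delta -> nrm (y2 - ytil t0 y0 0) <= delta ->
       nrm (ytil t y1 t0 - ytil t y2 t0)
         <= C1 * expR (- gamma * (t - t0)) * nrm (y1 - y2)) ->
  (forall (T : R) (N : nat), 0 < T -> (0 < N)%N ->
     [/\ Y T N 0 = y0,
         (forall k, (k <= N)%N -> M (Y T N k))
       & forall k, (k < N)%N ->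
           nrm (ytil (k.+1%:R * (T / N%:R)) (Y T N k) (k%:R * (T / N%:R))
                - Y T N k.+1) <= C2 * (T / N%:R) ^+ 2]) ->
  exists (C h0 : R), 0 < h0 /\
    forall (T : R) (N : nat), 0 < T -> (0 < N)%N -> T / N%:R < h0 ->
      forall k, (k <= N)%N ->
        nrm (Y T N k - ytil (k%:R * (T / N%:R)) y0 0) <= C * (T / N%:R).
Proof.
move=> hn ex invariant My0 [delta [gamma [C1 [delta_gt0 [gamma_gt0 stable]]]]] scheme.
set K := `|C1| * `|C2| * (1 + gamma) / gamma.
set S := 1 + K + `|C1| * K + `|C2|.
have K_ge0 : 0 <= K by rewrite divr_ge0 ?mulr_ge0 ?addr_ge0 // ltW.
have S_gt0 : 0 < S.
  by rewrite /S; have := normr_ge0 C2; have := mulr_ge0 (normr_ge0 C1) K_ge0; lra.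
exists K, (Num.min 1 (delta / S)); split; first by rewrite lt_min ltr01 divr_gt0.
move=> T N T_gt0 N_gt0; set h := T / N%:R; rewrite lt_min => /andP[h_lt1 h_lt].
have h_gt0 : 0 < h by rewrite divr_gt0 // ltr0n.
have [Y0 MY local_error] := scheme T N T_gt0 N_gt0.
apply: (global_error_bound (delta := delta) hn ex invariant My0 gamma_gt0 (normr_ge0 C1) _
  h_gt0 (ltW h_lt1) (normr_ge0 C2) Y0 MY _ (lexx K)).
- move=> t0 t y1 y2 t0_ge0 t0t M1 M2 near1 near2.
  apply: le_trans (stable t0 t y1 y2 t0_ge0 t0t M1 M2 near1 near2) _.
  rewrite ler_wpM2r ?nrm_ge0 // ler_wpM2r ?ler_norm // ltW // expR_gt0.
- move=> k kN; apply: le_trans (local_error k kN) _.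
  by rewrite ler_wpM2r ?ler_norm // exprn_ge0 // ltW.
- have hS : h * S <= delta by rewrite -ler_pdivlMr // ltW.
  apply: le_trans hS; rewrite mulrC; apply: ler_wpM2l; first exact: ltW.
  by rewrite /S -!addrA lerDr.
Qed.
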